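(* For all integers $r\ge1$ and $n\ge 1$, \[K_{A_r}(n\tilde\alpha_{A_r})=\mathsf{js}(\langle n\rangle,\langle n\rangle,r),\] where $\tilde\alpha_{A_r}=\varepsilon_1-\varepsilon_{r+1}$.
   Context: A juggling state is a finitely supported integer vector $\mathbf{s}=\langle s_1,s_2,\dots\rangle$ indexed by heights (trailing zeros omitted). A juggling sequence of length $n$ from $\mathbf{a}$ to $\mathbf{b}$ is a sequence $(\mathbf{s}_0,\dots,\mathbf{s}_n)$ with $\mathbf{s}_0=\mathbf{a}$, $\mathbf{s}_n=\mathbf{b}$, such that for each $i$ there are nonnegative integers $c^{(i)}_k$ (finitely many nonzero) with $\sum_k c^{(i)}_k=(\mathbf{s}_{i-1})_1$ and $(\mathbf{s}_i)_k=(\mathbf{s}_{i-1})_{k+1}+c^{(i)}_k$ for all $k\ge1$. $\mathsf{js}(\mathbf{a},\mathbf{b},n)$ is the number of such sequences. $\Phi^+_{A_r}=\{\varepsilon_i-\varepsilon_j:1\le i<j\le r+1\}\subset\mathbb{R}^{r+1}$; $K_{A_r}(\mu)$ is the number of finite multisets of elements of $\Phi^+_{A_r}$ summing to $\mu$. *)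

From HB Require Import structures.
From mathcomp Require Import all_boot all_order all_algebra.
Set Implicit Arguments. Unset Strict Implicit. Unset Printing Implicit Defensive.
Import Order.TTheory GRing.Theory Num.Theory.
Local Open Scope ring_scope.

Definition HasCard (T : eqType) (P : T -> Prop) (N : nat) : Prop :=
  exists s : seq T, [/\ uniq s, (forall x, P x <-> x \in s) & size s = N].

(* positive roots eps_i - eps_j, i < j, indexed by pairs *)
Definition posroot (r : nat) := {p : 'I_r.+1 * 'I_r.+1 | (p.1 < p.2)%N}.

(* standard basis vector eps_i (0-indexed: eps_1 is index ord0) *)
Definition eps (r : nat) (i : 'I_r.+1) : 'I_r.+1 -> int :=
  fun t => ((t == i) : nat)%:Z.

Definition root_vec (r : nat) (p : posroot r) : 'I_r.+1 -> int :=
  fun t => eps (val p).1 t - eps (val p).2 t.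

Definition alpha_tilde (r : nat) : 'I_r.+1 -> int :=
  fun t => eps ord0 t - eps ord_max t.

(* a finite multiset of positive roots = multiplicity function;
   it sums to mu *)
Definition KostantMultiset (r : nat) (mu : 'I_r.+1 -> int)
    (m : {ffun posroot r -> nat}) : Prop :=
  forall t : 'I_r.+1, \sum_(p : posroot r) (m p)%:Z * root_vec p t = mu t.

Definition Kostant_is (r : nat) (mu : 'I_r.+1 -> int) (N : nat) : Prop :=
  HasCard (KostantMultiset mu) N.

(* a juggling state <s_1, s_2, ...> is represented by the integer list
   [:: s_1; s_2; ...] with trailing zeros omitted (s`_k is s_{k+1}) *)
Definition is_state (s : seq int) : Prop := last 1 s != 0.

(* one throw: there are c_k >= 0 (finitely many nonzero, c`_k = c_{k+1})
   with sum c = s_1 and t_k = s_{k+1} + c_k for all k >= 1 *)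
Definition jstep (s t : seq int) : Prop :=
  exists c : seq nat,
    (sumn c)%:Z = s`_0 /\ forall k : nat, t`_k = s`_k.+1 + (nth 0%N c k)%:Z.

Definition is_juggling_seq (a b : seq int) (n : nat) (ss : seq (seq int)) : Prop :=
  [/\ size ss = n.+1,
      (forall s, s \in ss -> is_state s),
      nth [::] ss 0 = a,
      nth [::] ss n = b &
      (forall i, (i < n)%N -> jstep (nth [::] ss i) (nth [::] ss i.+1))].

Definition js_is (a b : seq int) (n N : nat) : Prop :=
  HasCard (is_juggling_seq a b n) N.

(* A multiset of positive roots eps_a - eps_b (a < b) of A_r is a function m
   on the edges of the complete acyclic digraph on {0, ..., r}, and it sums to
   n (eps_0 - eps_r) exactly when m is a flow of value n from 0 to r.  Read
   vertex i as time i and an edge (a, b) as a ball thrown at time a that lands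
   at time b.  The state at time i then lists, for each k, the n initial balls
   (if i + k = 0) and the balls thrown before i that land at time i + k; flow
   conservation at i < r says precisely that the balls landing at i are all
   rethrown, i.e. that consecutive states form a juggling step, and at r that
   the last state is <n>.  Conversely the throws of a juggling sequence are
   recovered as differences of consecutive states, so the two sets are in
   bijection.  Both are finite since a flow of value n carries at most
   n 2^r on each edge. *)

From mathcomp Require Import all_boot all_order all_algebra.
From mathcomp Require Import zify.
Import GRing.Theory Num.Theory.
Set Implicit Arguments. Unset Strict Implicit.

Lemma HasCard_filter (T : eqType) (p : pred T) (s : seq T) :
  (forall x, p x -> x \in s) -> HasCard p (size (undup (filter p s))).
Proof.
move=> ps; exists (undup (filter p s)); split=> // [|x]; first exact: undup_uniq.
by rewrite mem_undup mem_filter; split=> [px | /andP[]//]; rewrite px ps.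
Qed.

Lemma HasCard_transfer (T U : eqType) (P : T -> Prop) (Q : U -> Prop)
    (f : T -> U) (g : U -> T) N :
  (forall x, P x -> Q (f x)) -> (forall x, P x -> g (f x) = x) ->
  (forall y, Q y -> P (g y)) -> (forall y, Q y -> f (g y) = y) ->
  HasCard P N -> HasCard Q N.
Proof.
move=> PQ gf QP fg [s [us Ps <-]]; exists (map f s); split; last exact: size_map.
- rewrite map_inj_in_uniq // => x y /Ps Px /Ps Py fxy.
  by rewrite -(gf _ Px) -(gf _ Py) fxy.
- move=> y; split=> [Qy | /mapP [x /Ps Px ->]]; last exact: PQ.
  by rewrite -(fg _ Qy) map_f //; apply/Ps/QP.
Qed.

Lemma sum_ord_widen0 (F : nat -> nat) n1 n2 : n1 <= n2 ->
  (forall k, n1 <= k -> F k = 0) -> \sum_(k < n2) F k = \sum_(k < n1) F k.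
Proof.
move=> le12 F0; rewrite (big_ord_widen n2 F le12) [RHS]big_mkcond /=.
by apply: eq_bigr => k _; case: ltnP => // /F0.
Qed.

Lemma sumn_eq_sum (c : seq nat) (F : nat -> nat) N :
  (forall k, nth 0 c k = F k) -> (forall k, N <= k -> F k = 0) ->
  sumn c = \sum_(k < N) F k.
Proof.
move=> cF F0; rewrite sumnE (big_nth 0) big_mkord.
under eq_bigr do rewrite cF.
rewrite -(@sum_ord_widen0 F (size c) (size c + N)) ?leq_addr //.
  exact: sum_ord_widen0 (leq_addl _ _) F0.
by move=> k ck; rewrite -cF nth_default.
Qed.

Lemma Posz_sum (I : finType) (F : I -> nat) :
  ((\sum_i F i)%N%:Z = \sum_i (F i)%:Z)%R.
Proof. by rewrite -natz natr_sum; apply: eq_bigr => i _; rewrite natz. Qed.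

Section States.

Local Open Scope ring_scope.

Fixpoint trim (s : seq int) : seq int :=
  if s is x :: s' then
    let t := trim s' in if (t == [::]) && (x == 0) then [::] else x :: t
  else [::].

Lemma nth_trim s k : (trim s)`_k = s`_k.
Proof.
elim: s k => [|x s IH] k //=.
case: ifP => [/andP[/eqP s0 /eqP ->] | _]; last by case: k.
by case: k => //= k; rewrite -IH s0 nth_nil.
Qed.

Lemma is_state_trim s : is_state (trim s).
Proof.
rewrite /is_state; elim: s => [|x s IH] //=.
by case: ifP => // /negbT; case: (trim s) IH => [_ /= | y t IH _] //; rewrite eqxx.
Qed.

Lemma state_size_le s t :
  is_state t -> (forall k, s`_k = t`_k) -> (size t <= size s)%N.
Proof.
case: t => [|y t] //; rewrite /is_state /= (last_nth 0) => t_last st.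
by rewrite ltnNge; apply: contra t_last => ?; rewrite -st nth_default.
Qed.

Lemma state_ext s t : is_state s -> is_state t -> (forall k, s`_k = t`_k) -> s = t.
Proof.
move=> s_st t_st st; apply: (@eq_from_nth _ 0) => [|k _]; last exact: st.
by apply/eqP; rewrite eqn_leq !state_size_le.
Qed.

End States.

Section Flows.

Variables r n : nat.
Implicit Types (m : {ffun posroot r -> nat}) (a b t : nat).

Definition mult m a b : nat :=
  if a < b <= r then
    if insub (inord a : 'I_r.+1, inord b : 'I_r.+1) is Some p then m p else 0
  else 0.

Lemma mult_out m a b : ~~ (a < b <= r) -> mult m a b = 0.
Proof. by rewrite /mult => /negbTE ->. Qed.

Lemma mult_val m (p : posroot r) : mult m (val p).1 (val p).2 = m p.
Proof.
rewrite /mult; case: p => [[i j] /= ij].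
rewrite ij -ltnS ltn_ord insubT /= ?inord_val // => ij'.
by rewrite (bool_irrelevance ij' ij).
Qed.

Definition outflow m a := \sum_(b < r.+1) mult m a b.
Definition inflow m b := \sum_(a < r.+1) mult m a b.

Lemma inflowE m t : t <= r -> inflow m t = \sum_(a < t) mult m a t.
Proof.
move=> tr; apply: (@sum_ord_widen0 (mult m ^~ t)) => [|a ta]; first lia.
by apply: mult_out; rewrite ltnNge ta.
Qed.

Lemma outflowE m t : outflow m t = \sum_(k < r.+1) mult m t (t + k).+1.
Proof.
rewrite /outflow -(@sum_ord_widen0 _ r.+1 (t.+1 + r.+1)); last 2 first.
- lia.
- by move=> b rb; apply: mult_out; lia.
rewrite big_split_ord /= big1 // => b _; apply: mult_out.
by have := ltn_ord b; lia.
Qed.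

Lemma outflow_last m : outflow m r = 0.
Proof. by apply: big1 => b _; apply: mult_out; have := ltn_ord b; lia. Qed.

Lemma mult_le_outflow m a b : mult m a b <= outflow m a.
Proof.
case: (leqP b r) => br; last by rewrite mult_out //; lia.
by rewrite /outflow (bigD1 (Ordinal (br : b < r.+1))) //= leq_addr.
Qed.

Lemma sum_root_vec m (t : 'I_r.+1) :
  (\sum_p (m p)%:Z * root_vec p t = (outflow m t)%:Z - (inflow m t)%:Z)%R.
Proof.
pose G (q : 'I_r.+1 * 'I_r.+1) := ((mult m q.1 q.2)%:Z * (eps q.1 t - eps q.2 t))%R.
transitivity (\sum_(q : 'I_r.+1 * 'I_r.+1 | (q.1 < q.2)%N) G q)%R.
  rewrite (reindex_omap (val : posroot r -> _) insub) => [|q qP]; last first.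
    by rewrite insubT.
  apply: eq_big => [[q qP] | p _]; first by rewrite /= qP insubT /= eqxx.
  by rewrite /G mult_val.
rewrite big_mkcond /= (eq_bigr G) => [|q _]; last first.
  by case: ifP => // /negbT ?; rewrite /G mult_out ?mul0r //; lia.
rewrite -(pair_bigA _ (fun i j => G (i, j))) /G /=.
under eq_bigr do under eq_bigr do rewrite mulrBr.
under eq_bigr do rewrite sumrB.
have eps_t (F : 'I_r.+1 -> 'I_r.+1 -> int) :
    (\sum_i \sum_j F i j * eps i t = \sum_j F t j)%R.
  rewrite (bigD1 t) //= [X in (_ + X)%R]big1 ?addr0 => [|i ti]; last first.
    by apply: big1 => j _; rewrite /eps eq_sym (negbTE ti) mulr0.
  by apply: eq_bigr => j _; rewrite /eps eqxx mulr1.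
rewrite sumrB /outflow /inflow !Posz_sum eps_t.
by rewrite exchange_big (eps_t (fun j i => Posz (mult m i j))).
Qed.

Definition conservation m t :=
  outflow m t + (t == r) * n == inflow m t + (t == 0) * n.

Definition is_flow m := [forall t : 'I_r.+1, conservation m t].

Lemma is_flowP m : reflect (forall t, t <= r -> conservation m t) (is_flow m).
Proof.
apply: (iffP forallP) => [flow t tr | flow t]; last exact: flow _ (ltn_ord t).
by have := flow (inord t); rewrite inordK.
Qed.

Lemma kostant_flowP m : 0 < r ->
  KostantMultiset (fun t : 'I_r.+1 => (n%:Z * alpha_tilde t)%R) m <-> is_flow m.
Proof.
move=> r_gt0; rewrite /KostantMultiset; split=> [K | /is_flowP flow t].
  apply/is_flowP => t tr; move: (K (inord t)); rewrite sum_root_vec.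
  by rewrite /alpha_tilde /eps /conservation -!val_eqE /= !inordK //; lia.
move: (flow t (ltn_ord t)); rewrite sum_root_vec /alpha_tilde /eps /conservation.
by rewrite -!val_eqE /=; lia.
Qed.

Lemma flow_bound m : is_flow m -> forall p, m p <= n * 2 ^ r.
Proof.
move=> /is_flowP flow p.
pose S t := \sum_(a < t) outflow m a.
have out_le t : t < r -> outflow m t <= n + S t.
  move=> tr; have := flow t (ltnW tr); rewrite /conservation inflowE; last lia.
  move/eqP; have -> : (t == r) = false by lia.
  have : \sum_(a < t) mult m a t <= S t.
    by apply: leq_sum => a _; exact: mult_le_outflow.
  by case: (t == 0); lia.
have S_le t : t <= r -> n + S t <= n * 2 ^ t.
  elim: t => [|t IH] tr; first by rewrite /S big_ord0 expn0; lia.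
  rewrite /S big_ord_recr /= -/(S t) expnS.
  by have := IH (ltnW tr); have := out_le t tr; nia.
case: p => [[i j] /= ij]; rewrite -[m _]mult_val /=.
have ir : i < r by have := ltn_ord j; lia.
apply: (leq_trans (mult_le_outflow _ _ _)); apply: (leq_trans (out_le _ ir)).
apply: (leq_trans (S_le _ (ltnW ir))).
rewrite leq_mul2l leq_pexp2l //; lia.
Qed.

Lemma HasCard_flow : exists N, HasCard (fun m => is_flow m) N.
Proof.
pose bounded (g : {ffun posroot r -> 'I_(n * 2 ^ r).+1}) := [ffun p => val (g p)].
eexists; apply: (HasCard_filter (s := map bounded (enum {: {ffun _ -> _}}))).
move=> m /flow_bound m_le; apply/mapP; exists [ffun p => inord (m p)].
  by rewrite mem_enum.
by apply/ffunP => p; rewrite !ffunE /= inordK // ltnS m_le.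
Qed.

End Flows.

Section FlowsAsJugglingSequences.

Variables r n : nat.
Implicit Types (m : {ffun posroot r -> nat}) (ss : seq (seq int)).
Local Open Scope ring_scope.

(* The balls in the air at time i that land at time i + k. *)
Definition flow_state m i k : nat :=
  ((i + k == 0) * n + \sum_(a < i) mult m a (i + k))%N.

Definition state_seq m i : seq int :=
  trim (mkseq (fun k => (flow_state m i k)%:Z) r.+1).

Definition jseq_of_flow m := mkseq (state_seq m) r.+1.

Lemma flow_state_out m i k : (r < i + k)%N -> flow_state m i k = 0%N.
Proof.
move=> rik; rewrite /flow_state big1 => [|a _]; last by apply: mult_out; lia.
by have -> : (i + k == 0) = false by lia.
Qed.

Lemma nth_state_seq m i k : (state_seq m i)`_k = (flow_state m i k)%:Z.
Proof.
rewrite nth_trim; case: (ltnP k r.+1) => kr; first by rewrite nth_mkseq.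
by rewrite nth_default ?size_mkseq // flow_state_out //; lia.
Qed.

Lemma nth_jseq_of_flow m i :
  (i <= r)%N -> nth [::] (jseq_of_flow m) i = state_seq m i.
Proof. by move=> ir; rewrite nth_mkseq. Qed.

Lemma flow_stateS m i k :
  flow_state m i.+1 k = (flow_state m i k.+1 + mult m i (i + k).+1)%N.
Proof. by rewrite /flow_state big_ord_recr /= addSn addnS addnA. Qed.

Lemma flow_state0 m i :
  (i <= r)%N -> flow_state m i 0 = (inflow m i + (i == 0) * n)%N.
Proof. by move=> ir; rewrite /flow_state addn0 inflowE // addnC. Qed.

Lemma state_seq_single m i : (0 < n)%N -> (forall k, flow_state m i k.+1 = 0%N) ->
  state_seq m i = [:: n%:Z] <-> flow_state m i 0 = n.
Proof.
move=> n_gt0 tail0; split=> [si | si0].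
  by have := nth_state_seq m i 0; rewrite si => -[].
apply: state_ext => [||[|k]]; rewrite ?nth_state_seq ?si0 ?tail0 //=.
- exact: is_state_trim.
- by rewrite /is_state /= lt0n_neq0.
- by rewrite nth_nil.
Qed.

Lemma jstep_state_seq m i : (i < r)%N ->
  jstep (state_seq m i) (state_seq m i.+1) <-> outflow m i = flow_state m i 0.
Proof.
move=> ir; pose c k := mult m i (i + k).+1.
have c0 k : (r.+1 <= k)%N -> c k = 0%N by move=> rk; apply: mult_out; lia.
have nextE k : (state_seq m i.+1)`_k = (state_seq m i)`_k.+1 + (c k)%:Z.
  by rewrite !nth_state_seq flow_stateS PoszD.
split=> [[cs [sum_cs cs_k]] | out_i].
  have csE k : nth 0%N cs k = c k.
    by apply/eqP; rewrite -eqz_nat; apply/eqP/(addrI ((state_seq m i)`_k.+1));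
    rewrite -cs_k -nextE.
  apply/eqP; rewrite -eqz_nat outflowE -(sumn_eq_sum csE c0) sum_cs.
  by rewrite nth_state_seq.
have csE k : nth 0%N (mkseq c r.+1) k = c k.
  case: (ltnP k r.+1) => kr; first by rewrite nth_mkseq.
  by rewrite nth_default ?size_mkseq ?c0.
exists (mkseq c r.+1); split=> [|k]; last by rewrite nextE csE.
by rewrite (sumn_eq_sum csE c0) -outflowE out_i nth_state_seq.
Qed.

Lemma is_flow_states m : (0 < r)%N ->
  is_flow n m <-> (forall i, (i < r)%N -> outflow m i = flow_state m i 0)
                  /\ flow_state m r 0 = n.
Proof.
move=> r_gt0; rewrite flow_state0 //.
have r_neq0 : (r == 0) = false by lia.
split=> [/is_flowP flow | [out_i in_r]].
  split=> [i ir|]; last first.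
    by have /eqP := flow r (leqnn r); rewrite outflow_last eqxx r_neq0; lia.
  have /eqP := flow i (ltnW ir); rewrite flow_state0 1?ltnW //.
  have -> : (i == r) = false by lia.
  by rewrite addn0.
apply/is_flowP => t; rewrite leq_eqVlt => /orP[/eqP -> | tr].
  by rewrite /conservation outflow_last eqxx r_neq0; apply/eqP; lia.
rewrite /conservation out_i // flow_state0 1?ltnW //.
by rewrite (_ : (t == r) = false) ?addn0 //; lia.
Qed.

Lemma jseq_of_flowP m : (0 < r)%N -> (0 < n)%N ->
  is_juggling_seq [:: n%:Z] [:: n%:Z] r (jseq_of_flow m) <-> is_flow n m.
Proof.
move=> r_gt0 n_gt0; rewrite is_flow_states //.
have first_state : state_seq m 0 = [:: n%:Z].
  apply/state_seq_single => // [k|]; first by rewrite /flow_state big_ord0.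
  by rewrite /flow_state big_ord0 mul1n addn0.
have last_state : state_seq m r = [:: n%:Z] <-> flow_state m r 0 = n.
  by apply: state_seq_single => // k; apply: flow_state_out; lia.
split=> [[_ _ _ ss_r steps] | [out_i in_r]].
  split; last by apply/last_state; rewrite -nth_jseq_of_flow.
  move=> i ir; apply/jstep_state_seq => //.
  by rewrite -!nth_jseq_of_flow ?(ltnW ir) //; apply: steps.
split=> [||||i ir]; rewrite ?nth_jseq_of_flow //.
- exact: size_mkseq.
- by move=> s /mapP[i _ ->]; apply: is_state_trim.
- exact/last_state.
- exact/jstep_state_seq/out_i.
- exact: ltnW.
Qed.

(* The number of balls thrown at time a that land at time b. *)
Definition throw ss a b : int :=
  (nth [::] ss a.+1)`_(b - a).-1 - (nth [::] ss a)`_(b - a).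

Definition flow_of_jseq ss : {ffun posroot r -> nat} :=
  [ffun p : posroot r => `|throw ss (val p).1 (val p).2|%N].

Lemma flow_of_jseqK m : flow_of_jseq (jseq_of_flow m) = m.
Proof.
apply/ffunP => -[[i j] ij]; rewrite ffunE /throw -(mult_val m (exist _ (i, j) ij)).
have [ir jr] : (i < r /\ j <= r)%N by move: ij (ltn_ord j) => /=; lia.
rewrite !nth_jseq_of_flow ?nth_state_seq /= ?(ltnW ir) //.
have -> : (j - i)%N = (j - i).-1.+1 by move: ij => /=; lia.
rewrite flow_stateS PoszD addrAC subrr add0r.
by have -> : (i + (j - i).-1).+1 = j by move: ij => /=; lia.
Qed.

Lemma jstep_ge0 s t k : jstep s t -> 0 <= t`_k - s`_k.+1.
Proof. by case=> c [_ ->]; rewrite addrAC subrr add0r. Qed.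

Section JugglingSequenceToFlow.

Variable ss : seq (seq int).
Hypothesis ss_jseq : is_juggling_seq [:: n%:Z] [:: n%:Z] r ss.

Lemma nth_jseq_throws i k :
  (nth [::] ss i)`_k = ((i + k == 0) * n)%N%:Z + \sum_(a < i) throw ss a (i + k).
Proof.
have [_ _ ss0 _ _] := ss_jseq.
elim: i k => [|i IH] k.
  by rewrite ss0 big_ord0 addr0; case: k => [|k] /=; rewrite ?mul1n ?nth_nil.
rewrite big_ord_recr addrA addSnnS -IH /throw.
have -> : (i + k.+1 - i = k.+1)%N by lia.
by rewrite addrC subrK.
Qed.

Lemma throw_ge0 a b : (a < r)%N -> (a < b)%N -> 0 <= throw ss a b.
Proof.
have [_ _ _ _ steps] := ss_jseq; move=> ar ab.
by have := jstep_ge0 ((b - a).-1) (steps a ar); rewrite prednK ?subn_gt0.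
Qed.

Lemma throw_out a b : (a < r)%N -> (r < b)%N -> throw ss a b = 0.
Proof.
have [_ _ _ ss_r _] := ss_jseq; move=> ar rb.
have := nth_jseq_throws r (b - r); rewrite ss_r subnKC 1?ltnW //.
have -> : (b - r)%N = (b - r).-1.+1 by lia.
have -> : (b == 0) = false by lia.
rewrite /= nth_nil add0r => /esym/psumr_eq0P throws0.
apply: (throws0 _ (Ordinal ar)) => // c _.
by apply: throw_ge0 (ltn_ord c) _; have := ltn_ord c; lia.
Qed.

Lemma mult_flow_of_jseq a b : (a < r)%N -> (a < b)%N ->
  (mult (flow_of_jseq ss) a b)%:Z = throw ss a b.
Proof.
move=> ar ab; case: (leqP b r) => br; last by rewrite mult_out ?throw_out //; lia.
have ab' : ((inord a : 'I_r.+1) < (inord b : 'I_r.+1))%N by rewrite !inordK //; lia.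
rewrite /mult ab br insubT /= ffunE /= !inordK //; try lia.
by rewrite gez0_abs // throw_ge0.
Qed.

Lemma flow_state_of_jseq i k : (i <= r)%N ->
  (flow_state (flow_of_jseq ss) i k)%:Z = (nth [::] ss i)`_k.
Proof.
move=> ir; rewrite nth_jseq_throws PoszD Posz_sum.
congr (_ + _); apply: eq_bigr => a _.
by apply: mult_flow_of_jseq; have := ltn_ord a; lia.
Qed.

Lemma jseq_of_flowK : jseq_of_flow (flow_of_jseq ss) = ss.
Proof.
have [ss_size ss_states _ _ _] := ss_jseq.
apply: (@eq_from_nth _ [::]) => [|i]; rewrite size_mkseq ?ss_size // => ir.
rewrite nth_jseq_of_flow //; apply: state_ext => [||k].
- exact: is_state_trim.
- by apply/ss_states/mem_nth; rewrite ss_size.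
- by rewrite nth_state_seq flow_state_of_jseq.
Qed.

End JugglingSequenceToFlow.

End FlowsAsJugglingSequences.

Local Open Scope ring_scope.

Theorem mainTheorem5 (r n : nat) (hr : (1 <= r)%N) (hn : (1 <= n)%N) :
  exists N : nat,
    Kostant_is (fun t : 'I_r.+1 => n%:Z * @alpha_tilde r t) N /\
    js_is [:: n%:Z] [:: n%:Z] r N.
Proof.
have [N flows_N] := HasCard_flow r n.
exists N; split.
  by apply: (HasCard_transfer (f := id) (g := id) _ _ _ _ flows_N) => // m
    /(kostant_flowP _ _ hr).
apply: (HasCard_transfer (f := @jseq_of_flow r n) (g := @flow_of_jseq r)
          _ _ _ _ flows_N) => m.
- by move/(jseq_of_flowP m hr hn).
- by move=> _; apply: flow_of_jseqK.
- by move=> m_jseq; apply/(jseq_of_flowP _ hr hn); rewrite jseq_of_flowK.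
- exact: jseq_of_flowK.
Qed.
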